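(* Let $S=[S_1,\ldots,S_m]$ be a sequence of formulas and $S_i$ one of its formulas. Then both $\emptyset[S_i]\cdot S$ and $\emptyset[\neg S_i]\cdot S$ coincide with $\emptyset S$.
   Context: Propositional models are truth assignments over a finite set of variables; a formula used where a set of models is expected stands for its set of models. A doxastic state is a sequence $[C(0),\ldots,C(k)]$ of nonempty, pairwise disjoint sets of models covering all models. The flat doxastic state $\emptyset$ is $[\text{all models}]$. Lexicographic revision: $C\,\mathrm{lex}(A) = [C(0)\cap A,\ldots,C(k)\cap A, C(0)\setminus A,\ldots,C(k)\setminus A]$, empty sets discarded. For a sequence of formulas $T=[T_1,\ldots,T_n]$, $\emptyset T$ denotes $\emptyset$ revised lexicographically by $T_1$, then $T_2$, ..., then $T_n$. $\cdot$ denotes concatenation of sequences. *)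

From mathcomp Require Import all_boot.
Set Implicit Arguments. Unset Strict Implicit. Unset Printing Implicit Defensive.

Definition model (n : nat) := {ffun 'I_n -> bool}.

Inductive form (n : nat) : Type :=
| FVar of 'I_n
| FTop
| FBot
| FNeg of form n
| FAnd of form n & form n
| FOr of form n & form n
| FImp of form n & form n.

Arguments FTop {n}. Arguments FBot {n}.

Fixpoint sat n (f : form n) (m : model n) : bool :=
  match f with
  | FVar v => m v
  | FTop => true
  | FBot => false
  | FNeg g => ~~ sat g m
  | FAnd g h => sat g m && sat h m
  | FOr g h => sat g m || sat h m
  | FImp g h => sat g m ==> sat h m
  end.

Definition mods n (f : form n) : {set model n} := [set m | sat f m].

(* A doxastic state is a sequence of sets of models (index 0 = most plausible). *)
Definition state n := seq {set model n}.

Definition flat n : state n := [:: setT].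

Definition lex n (C : state n) (A : {set model n}) : state n :=
  [seq X <- [seq X :&: A | X <- C] ++ [seq X :\: A | X <- C] | X != set0].

Definition revise n (C : state n) (T : seq (form n)) : state n :=
  foldl (fun D f => lex D (mods f)) C T.

From mathcomp Require Import all_boot.
Set Implicit Arguments. Unset Strict Implicit. Unset Printing Implicit Defensive.

(* Revising the flat state by S_i (or by its negation) only cuts its single
   cell into its S_i-part and its non-S_i-part.  If empty cells are kept until
   the very end, this cut commutes with every later revision, so revising by
   S_i :: S is the cut of the state obtained from S.  But S contains S_i, and
   once a state has been revised by S_i every cell, and every cell of any later
   refinement, lies entirely inside or entirely outside S_i: the cut then only
   adds empty cells, which are discarded. *)

Section LexicographicRevision.
Variable n : nat.
Implicit Types (D : state n) (A B X : {set model n}) (T : seq (form n)).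

Definition prune D : state n := [seq X <- D | X != set0].

Definition lex_raw D A : state n :=
  [seq X :&: A | X <- D] ++ [seq X :\: A | X <- D].

Definition revise_raw D T : state n :=
  foldl (fun D f => lex_raw D (mods f)) D T.

Definition cut A D : state n := flatten [seq [:: X :&: A; X :\: A] | X <- D].

Definition homogeneous A D := all (fun X => (X \subset A) || [disjoint X & A]) D.

Lemma prune_map (h : {set model n} -> {set model n}) D :
  h set0 = set0 -> prune (map h (prune D)) = prune (map h D).
Proof.
move=> h0; elim: D => //= X D IH.
by case: eqP => [-> | _] /=; rewrite ?h0 ?eqxx IH.
Qed.

Lemma prune_lex_raw D A : prune (lex_raw (prune D) A) = prune (lex_raw D A).
Proof.
by rewrite /prune !filter_cat -!/(prune _) !prune_map ?set0I ?set0D.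
Qed.

Lemma eq_prune_revise_raw D1 D2 T :
  prune D1 = prune D2 -> prune (revise_raw D1 T) = prune (revise_raw D2 T).
Proof.
elim: T D1 D2 => //= f T IH D1 D2 eqD; apply: IH.
by rewrite -prune_lex_raw eqD prune_lex_raw.
Qed.

Lemma revise_prune D T : revise (prune D) T = prune (revise_raw D T).
Proof.
elim: T D => //= f T IH D.
rewrite -[lex _ _]/(prune (lex_raw (prune D) (mods f))) IH.
exact/eq_prune_revise_raw/prune_lex_raw.
Qed.

Lemma prune_flat : prune (flat n) = flat n.
Proof. by rewrite /prune /= -cards_eq0 cardsT card_ffun card_bool expn_eq0. Qed.

Lemma revise_flat T : revise (flat n) T = prune (revise_raw (flat n) T).
Proof. by rewrite -revise_prune prune_flat. Qed.

Lemma lex_raw_cut A B D : lex_raw (cut A D) B = cut A (lex_raw D B).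
Proof.
rewrite /lex_raw /cut !map_flatten map_cat flatten_cat -!map_comp.
congr (_ ++ _); congr flatten; apply: eq_map => X /=.
  by rewrite setIAC setIDAC.
by rewrite setIDAC !setDDl setUC.
Qed.

Lemma revise_raw_cut A D T : revise_raw (cut A D) T = cut A (revise_raw D T).
Proof. by elim: T D => //= f T IH D; rewrite lex_raw_cut IH. Qed.

Lemma prune_cut A D : homogeneous A D -> prune (cut A D) = prune D.
Proof.
elim: D => //= X D IH /andP [homX /IH {}IH].
rewrite /prune /= -/(prune _) -/(cut A D) -/(prune _) IH.
case/orP: homX => [XA | XA].
  by rewrite (setIidPl XA) (eqP (_ : X :\: A == set0)) ?eqxx ?setD_eq0.
by rewrite (setDidPl XA) (eqP (_ : X :&: A == set0)) ?eqxx ?setI_eq0.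
Qed.

Lemma homogeneousC A D : homogeneous (~: A) D = homogeneous A D.
Proof.
apply: eq_all => X.
by rewrite [[disjoint X & ~: A]]disjoints_subset setCK -disjoints_subset orbC.
Qed.

Lemma homogeneous_lex_raw A B D : homogeneous A D -> homogeneous A (lex_raw D B).
Proof.
have homW (X Y : {set model n}) : Y \subset X ->
    (X \subset A) || [disjoint X & A] -> (Y \subset A) || [disjoint Y & A].
  move=> YX /orP [XA | XA]; apply/orP; first by left; apply: subset_trans XA.
  by right; apply: disjointWl XA.
move=> /allP homD; rewrite /homogeneous all_cat !all_map.
by apply/andP; split; apply/allP => X /homD /=; apply: homW; rewrite ?subsetIl ?subsetDl.
Qed.

Lemma homogeneous_lex_raw_by A D : homogeneous A (lex_raw D A).
Proof.
rewrite /homogeneous all_cat !all_map.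
apply/andP; split; apply/allP => X _ /=; first by rewrite subsetIr.
by rewrite disjoints_subset setDE subsetIr orbT.
Qed.

Lemma homogeneous_revise_raw A D T :
  homogeneous A D -> homogeneous A (revise_raw D T).
Proof. by elim: T D => //= f T IH D /(homogeneous_lex_raw (mods f))/IH. Qed.

Lemma homogeneous_revise_raw_nth D T i :
  i < size T -> homogeneous (mods (nth FTop T i)) (revise_raw D T).
Proof.
move=> ltiT; rewrite -[in revise_raw _ _](cat_take_drop i T) (drop_nth FTop ltiT).
by rewrite /revise_raw foldl_cat /=; apply/homogeneous_revise_raw/homogeneous_lex_raw_by.
Qed.

Lemma revise_flat_cons f T :
  homogeneous (mods f) (revise_raw (flat n) T) ->
  revise (flat n) (f :: T) = revise (flat n) T.
Proof.
move=> homT; rewrite !revise_flat /=.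
by rewrite -[lex_raw _ _]/(cut (mods f) (flat n)) revise_raw_cut prune_cut.
Qed.

End LexicographicRevision.

Theorem mainTheorem12 (n : nat) (S : seq (form n)) (i : nat) :
  i < size S ->
  revise (flat n) (nth FTop S i :: S) = revise (flat n) S /\
  revise (flat n) (FNeg (nth FTop S i) :: S) = revise (flat n) S.
Proof.
move=> ltiS; have homS := homogeneous_revise_raw_nth (flat n) ltiS.
have modsN : mods (FNeg (nth FTop S i)) = ~: mods (nth FTop S i).
  by apply/setP => m; rewrite !inE.
by split; apply: revise_flat_cons; rewrite ?modsN ?homogeneousC.
Qed.
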